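(* Let $n\ge 1$ and let $p\in\mathbb{P}^n$ be a word with no immediate repetitions. Then $p$ or $p^{+1}$ occurs as a subsequence of the first $n$ runs of the infinite zigzag word.
   Context: $\mathbb{P}$ denotes the positive integers; a word over $\mathbb{P}$ is a finite sequence of positive integers, $\mathbb{P}^n$ is the set of such words of length $n$, and $p(i)$ denotes the $i$th letter of $p$. The word $p^{+1}$ is defined by $p^{+1}(i)=p(i)+1$ for all $i$. A word $p$ has an immediate repetition if $p(i)=p(i+1)$ for some index $i$. The infinite zigzag word is the concatenation $R_1R_2R_3\cdots$ of runs, where each odd-indexed run $R_k$ is the ascending sequence $1,3,5,7,\dots$ of all odd positive integers and each even-indexed run $R_k$ is the descending sequence $\dots,8,6,4,2$ of all even positive integers. A word $p$ occurs as a subsequence of the first $m$ runs of the infinite zigzag word if $p$ can be written as a concatenation $p=q_1q_2\cdots q_m$ of (possibly empty) words such that for each odd $k$, $q_k$ is a strictly increasing sequence of odd integers, and for each even $k$, $q_k$ is a strictly decreasing sequence of even integers. *)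

From mathcomp Require Import all_boot.
Set Implicit Arguments. Unset Strict Implicit. Unset Printing Implicit Defensive.

Definition word_over_P (p : seq nat) : bool := all (fun a => 0 < a) p.

Definition shift1 (p : seq nat) : seq nat := map S p.

Definition has_imm_rep (p : seq nat) : Prop :=
  exists i, i.+1 < size p /\ nth 0 p i = nth 0 p i.+1.

Definition run_piece_ok (k : nat) (q : seq nat) : bool :=
  if odd k then all odd q && sorted ltn q
  else all (fun a => ~~ odd a) q && sorted gtn q.

Definition occurs_in_zigzag (m : nat) (p : seq nat) : Prop :=
  exists qs : seq (seq nat),
    [/\ size qs = m, flatten qs = p &
        forall k, k < m -> run_piece_ok k.+1 (nth [::] qs k)].

(* Split a word greedily into zigzag runs: a letter b following a stays in the
   current run when it has the same parity and continues the run's direction,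
   moves to the next run when its parity differs, and otherwise skips one run.
   Since a and b differ, each transition costs 0 in one of p, p^{+1} and 2 in
   the other, or 1 in both; together with the first letter (1 run if odd, 2 if
   even, one of each for p and p^{+1}) the two decompositions use 2n + 1 runs,
   so one of them uses at most n. *)

From mathcomp Require Import all_boot.
From mathcomp Require Import zify.

Set Implicit Arguments.
Unset Strict Implicit.
Unset Printing Implicit Defensive.

Definition continues_run (a b : nat) : bool := if odd a then a < b else b < a.

Definition step_cost (a b : nat) : nat :=
  if odd a != odd b then 1 else if continues_run a b then 0 else 2.

Fixpoint greedy_cost (a : nat) (r : seq nat) : nat :=
  if r is b :: r' then step_cost a b + greedy_cost b r' else 0.

Definition start_cost (a : nat) : nat := if odd a then 1 else 2.

Definition zigzag_from (k : nat) (qs : seq (seq nat)) : Prop :=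
  forall j, j < size qs -> run_piece_ok (k + j) (nth [::] qs j).

Lemma zigzag_from_cons k q qs :
  zigzag_from k (q :: qs) <-> run_piece_ok k q /\ zigzag_from k.+1 qs.
Proof.
split=> [ok | [ok_q ok_qs] [|j] /= lt_j]; last 2 first.
- by rewrite addn0.
- by rewrite addnS -addSn; apply: ok_qs.
split=> [|j lt_j]; first by have := ok 0 isT; rewrite addn0.
by rewrite addSn -addnS; apply: ok j.+1 lt_j.
Qed.

Lemma occurs_in_zigzagE m p :
  occurs_in_zigzag m p <->
  exists qs, [/\ size qs = m, flatten qs = p & zigzag_from 1 qs].
Proof.
split=> -[qs [size_qs flat_qs ok_qs]]; exists qs; split=> // k.
  by rewrite add1n size_qs; apply: ok_qs.
by rewrite -size_qs -add1n; apply: ok_qs.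
Qed.

Lemma run_piece_ok_nil k : run_piece_ok k [::].
Proof. by rewrite /run_piece_ok; case: (odd k). Qed.

Lemma run_piece_ok_singleton k a : odd k = odd a -> run_piece_ok k [:: a].
Proof. by rewrite /run_piece_ok /= => ->; case: ifP => ->. Qed.

Lemma run_piece_ok_cons2 k a b t :
  odd k = odd a -> odd a = odd b -> continues_run a b ->
  run_piece_ok k (b :: t) -> run_piece_ok k [:: a, b & t].
Proof.
rewrite /run_piece_ok /continues_run /= => -> odd_b.
by case: (odd a) odd_b => <- /= -> /andP[-> ->].
Qed.

Lemma odd_add_step_cost k a b :
  odd k = odd a -> odd (k + step_cost a b) = odd b.
Proof.
rewrite /step_cost oddD => ->.
by case: (odd a) (odd b) => [] [] //=; case: ifP.
Qed.

Lemma greedy_zigzag_from a r k : odd k = odd a ->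
  exists t qs, [/\ size qs = greedy_cost a r,
    flatten ((a :: t) :: qs) = a :: r & zigzag_from k ((a :: t) :: qs)].
Proof.
elim: r a k => [|b r IH] a k odd_k.
  exists [::], [::]; split=> //.
  by apply/zigzag_from_cons; split; first exact: run_piece_ok_singleton.
have [t [qs [size_qs flat_qs /zigzag_from_cons[]]]] := IH b _ (odd_add_step_cost b odd_k).
have ok_a := run_piece_ok_singleton odd_k.
rewrite /= -size_qs -flat_qs /step_cost.
case: eqP => [par_ab | _] /=; last first.
  rewrite addn1 => ok_b ok_qs; exists [::], ((b :: t) :: qs); split=> //.
  by apply/zigzag_from_cons; split=> //; apply/zigzag_from_cons.
case: ifP => dir_ab; rewrite ?addn0 ?addn2 => ok_b ok_qs.
  exists (b :: t), qs; split=> //; apply/zigzag_from_cons; split=> //.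
  exact: run_piece_ok_cons2.
exists [::], ([::] :: (b :: t) :: qs); split=> //.
apply/zigzag_from_cons; split=> //; apply/zigzag_from_cons; split.
  exact: run_piece_ok_nil.
exact/zigzag_from_cons.
Qed.

Lemma occurs_in_zigzag_greedy a r :
  occurs_in_zigzag (start_cost a + greedy_cost a r) (a :: r).
Proof.
apply/occurs_in_zigzagE; rewrite /start_cost.
case odd_a: (odd a).
  have [t [qs [size_qs flat_qs ok_qs]]] := @greedy_zigzag_from a r 1 (esym odd_a).
  by exists ((a :: t) :: qs); rewrite /= size_qs add1n.
have [t [qs [size_qs flat_qs ok_qs]]] := @greedy_zigzag_from a r 2 (esym odd_a).
exists ([::] :: (a :: t) :: qs); split=> //=; first by rewrite size_qs add2n.
by apply/zigzag_from_cons; split; first exact: run_piece_ok_nil.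
Qed.

Lemma occurs_in_zigzag_le m n p :
  m <= n -> occurs_in_zigzag m p -> occurs_in_zigzag n p.
Proof.
move=> le_mn /occurs_in_zigzagE[qs [size_qs flat_qs ok_qs]].
apply/occurs_in_zigzagE; exists (qs ++ nseq (n - m) [::]); split.
- by rewrite size_cat size_nseq size_qs subnKC.
- by rewrite flatten_cat flat_qs; elim: (n - m) => [|d] /=; rewrite ?cats0.
- move=> j _; rewrite nth_cat; case: ifP => [lt_j | _]; first exact: ok_qs j lt_j.
  by rewrite nth_nseq if_same; apply: run_piece_ok_nil.
Qed.

Lemma start_cost_shift a : start_cost a + start_cost a.+1 = 3.
Proof. by rewrite /start_cost /=; case: (odd a). Qed.

Lemma step_cost_shift a b : a != b -> step_cost a b + step_cost a.+1 b.+1 = 2.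
Proof.
rewrite /step_cost /continues_run /= !ltnS.
by case: (odd a) (odd b) => [] [] /=; case: ltngtP.
Qed.

Lemma greedy_cost_shift a r : path (fun x y => x != y) a r ->
  greedy_cost a r + greedy_cost a.+1 (map S r) = 2 * size r.
Proof.
elim: r a => [|b r IH] a //= /andP[neq_ab path_r].
by rewrite addnACA step_cost_shift // IH // mulnS.
Qed.

Lemma no_imm_rep_path a r :
  ~ has_imm_rep (a :: r) -> path (fun x y => x != y) a r.
Proof.
move=> no_rep; apply/(pathP 0) => i lt_i; apply/eqP => eq_i.
by apply: no_rep; exists i.
Qed.

Theorem proposition5p2 (n : nat) (p : seq nat) :
  1 <= n -> size p = n -> word_over_P p -> ~ has_imm_rep p ->
  occurs_in_zigzag n p \/ occurs_in_zigzag n (shift1 p).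
Proof.
case: p => [|a r] n_gt0 size_p _ no_rep; first by rewrite -size_p in n_gt0.
have total_cost :
    (start_cost a + greedy_cost a r) + (start_cost a.+1 + greedy_cost a.+1 (map S r))
    = n.*2.+1.
  rewrite addnACA start_cost_shift greedy_cost_shift; last exact: no_imm_rep_path.
  by rewrite -size_p /= -mul2n; lia.
have occ_p := occurs_in_zigzag_greedy a r.
have occ_shift := occurs_in_zigzag_greedy a.+1 (map S r).
have [le_p | lt_shift] := leqP (start_cost a + greedy_cost a r) n.
  by left; apply: occurs_in_zigzag_le occ_p.
right; apply: occurs_in_zigzag_le occ_shift; lia.
Qed.
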